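(* Let $d=2$. Assume $\beta\ne0$, $|\sigma^{(1)}|\ne|\sigma^{(2)}|$, and for $\alpha=1,2$: $\eta^{(\alpha)}\ne0$, $\mathbf v^{(\alpha)}_\pm\not\equiv0$. Then for every $f\in[\widetilde f_{e,l},\widetilde f_{e,u}]$ we have $\widetilde{\mathcal E}^{(1)}_f\cap\widetilde{\mathcal E}^{(2)}_f\subseteq\mathcal F_{f,e}$.
   Context: Let $\Omega\subset\mathbb{R}^2$ be a bounded Lipschitz domain and let $\chi^{(1)}$ be the indicator function of a measurable subset of $\Omega$ (''phase 1''), $\chi^{(2)}=1-\chi^{(1)}$ (''phase 2''). Let $\sigma^{(\alpha)}=\sigma^{(\alpha)}_1+\mathrm{i}\sigma^{(\alpha)}_2$ ($\alpha=1,2$) be complex constants with $\sigma^{(\alpha)}_1>0$ and $\sigma^{(1)}\neq\sigma^{(2)}$, and $\sigma=\sigma^{(1)}\chi^{(1)}+\sigma^{(2)}\chi^{(2)}$. Let $V\in H^1(\Omega;\mathbb C)$ be a weak solution of $\nabla\cdot(\sigma\nabla V)=0$ in $\Omega$. Set $\mathbf E=-\nabla V=\mathbf E_1+\mathrm{i}\mathbf E_2$, $\mathbf J=\sigma\mathbf E=\mathbf J_1+\mathrm{i}\mathbf J_2$ (real parts/imaginary parts). $\langle u\rangle=|\Omega|^{-1}\int_\Omega u$; $f^{(1)}=\langle\chi^{(1)}\rangle\in(0,1)$. For $\alpha,m=1,2$: $\mathbf E^{(\alpha)}_m=\chi^{(\alpha)}\mathbf E_m$, $\mathbf e^{(\alpha)}_m=\langle\mathbf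 E^{(\alpha)}_m\rangle$, $\eta^{(\alpha)}=\langle\|\mathbf E^{(\alpha)}_1\|^2\rangle+\langle\|\mathbf E^{(\alpha)}_2\|^2\rangle$. $\beta=\sigma^{(1)}_1\sigma^{(2)}_2-\sigma^{(1)}_2\sigma^{(2)}_1$. With $\beta\ne0$ define $\gamma=(\sigma^{(1)}_1\sigma^{(2)}_1+\sigma^{(1)}_2\sigma^{(2)}_2)/\beta$, $\psi^{(1)}=|\sigma^{(2)}|^2/\beta$, $\psi^{(2)}=|\sigma^{(1)}|^2/\beta$, $\xi^{(1)}=(\sigma^{(2)}_2\langle\mathbf E_1\cdot\mathbf J_2\rangle+\sigma^{(2)}_1\langle\mathbf E_1\cdot\mathbf J_1\rangle)/\beta$, $\xi^{(2)}=(\sigma^{(1)}_2\langle\mathbf E_1\cdot\mathbf J_2\rangle+\sigma^{(1)}_1\langle\mathbf E_1\cdot\mathbf J_1\rangle)/\beta$. For $f\in(0,1)$ and $(x,y)\in\mathbb R^2$ define $$S^{(1)}_f(x,y)=\begin{bmatrix}x-\frac{\|\mathbf e^{(1)}_1\|^2}{f} & s_1\\ s_1 & -x+\eta^{(1)}-\frac{\|\mathbf e^{(1)}_2\|^2}{f}\end{bmatrix},\quad s_1=-\gamma x-\psi^{(1)}y+\xi^{(1)}-\frac{\mathbf e^{(1)}_1\cdot\mathbf e^{(1)}_2}{f},$$ $$S^{(2)}_f(x,y)=\begin{bmatrix}y-\frac{\|\mathbf e^{(2)}_1\|^2}{1-f} & s_2\\ s_2 & -y+\eta^{(2)}-\frac{\|\mathbf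 e^{(2)}_2\|^2}{1-f}\end{bmatrix},\quad s_2=\psi^{(2)} x+\gamma y-\xi^{(2)}-\frac{\mathbf e^{(2)}_1\cdot\mathbf e^{(2)}_2}{1-f},$$ and $p^{(\alpha)}_f=\det S^{(\alpha)}_f$. Let $R_\perp=\begin{bmatrix}0&1\\-1&0\end{bmatrix}$, $B^{(\alpha)}_{12}=\langle\mathbf E^{(\alpha)}_1\cdot R_\perp\mathbf E^{(\alpha)}_2\rangle$, $f_*=f$ if $\alpha=1$ and $f_*=1-f$ if $\alpha=2$, $\tau^{(\alpha)}_f=\big(B^{(\alpha)}_{12}-\frac{1}{f_*}\mathbf e^{(\alpha)}_1\cdot R_\perp\mathbf e^{(\alpha)}_2\big)^2$. Let $\mathbf v^{(\alpha)}_\pm=\mathbf E^{(\alpha)}_1\pm R_\perp\mathbf E^{(\alpha)}_2$, $\widetilde f_{e,l}=\max_\pm \|\langle\mathbf v^{(1)}_\pm\rangle\|^2/\langle\|\mathbf v^{(1)}_\pm\|^2\rangle$, $\widetilde f_{e,u}=\min_\pm\big(1-\|\langle\mathbf v^{(2)}_\pm\rangle\|^2/\langle\|\mathbf v^{(2)}_\pm\|^2\rangle\big)$. Define $\widetilde{\mathcal E}^{(\alpha)}_f=\{(x,y)\in\mathbb R^2:p^{(\alpha)}_f(x,y)\ge\tau^{(\alpha)}_f\}$ and the rectangle $\mathcal F_{f,e}=\{(x,y): \|\mathbf e^{(1)}_1\|^2/f\le x\le \eta^{(1)}-\|\mathbf e^{(1)}_2\|^2/f,\ \|\mathbf e^{(2)}_1\|^2/(1-f)\le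 y\le \eta^{(2)}-\|\mathbf e^{(2)}_2\|^2/(1-f)\}$. *)

From Stdlib Require Import Reals.
Open Scope R_scope.

Definition vec := (R * R)%type.
Definition vadd (u v : vec) : vec := (fst u + fst v, snd u + snd v).
Definition vsub (u v : vec) : vec := (fst u - fst v, snd u - snd v).
Definition vscale (c : R) (v : vec) : vec := (c * fst v, c * snd v).
Definition dot (u v : vec) : R := fst u * fst v + snd u * snd v.
Definition nsq (v : vec) : R := dot v v.
Definition Rperp (v : vec) : vec := (snd v, - fst v).

(* Abstract model of the normalized average <u> = |Omega|^-1 \int_Omega u :
   a normalized, linear, positive functional. *)
Definition is_average (X : Type) (avg : (X -> R) -> R) : Prop :=
  (forall g h : X -> R, avg (fun x => g x + h x) = avg g + avg h) /\
  (forall (c : R) (g : X -> R), avg (fun x => c * g x) = c * avg g) /\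
  avg (fun _ => 1) = 1 /\
  (forall g : X -> R, (forall x, 0 <= g x) -> 0 <= avg g).

Record Data := mkData {
  X : Type;                     (* points of Omega *)
  avg : (X -> R) -> R;
  chi1 : X -> bool;
  s1r : R; s1i : R;             (* sigma^(1) = s1r + i s1i *)
  s2r : R; s2i : R;             (* sigma^(2) = s2r + i s2i *)
  E1 : X -> vec;                (* Re E *)
  E2 : X -> vec                 (* Im E *)
}.

Inductive phase := P1 | P2.

Section Defs.
Variable D : Data.

Definition vavg (F : X D -> vec) : vec :=
  (avg D (fun x => fst (F x)), avg D (fun x => snd (F x))).

Definition chi (p : phase) (x : X D) : R :=
  match p with
  | P1 => if chi1 D x then 1 else 0
  | P2 => if chi1 D x then 0 else 1
  end.

Definition sig_r (x : X D) : R := s1r D * chi P1 x + s2r D * chi P2 x.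
Definition sig_i (x : X D) : R := s1i D * chi P1 x + s2i D * chi P2 x.

(* J = sigma E = J1 + i J2 *)
Definition J1 (x : X D) : vec := vsub (vscale (sig_r x) (E1 D x)) (vscale (sig_i x) (E2 D x)).
Definition J2 (x : X D) : vec := vadd (vscale (sig_i x) (E1 D x)) (vscale (sig_r x) (E2 D x)).

Definition Ea1 (p : phase) (x : X D) : vec := vscale (chi p x) (E1 D x).
Definition Ea2 (p : phase) (x : X D) : vec := vscale (chi p x) (E2 D x).

Definition e1 (p : phase) : vec := vavg (Ea1 p).
Definition e2 (p : phase) : vec := vavg (Ea2 p).

Definition eta (p : phase) : R :=
  avg D (fun x => nsq (Ea1 p x)) + avg D (fun x => nsq (Ea2 p x)).

Definition beta : R := s1r D * s2i D - s1i D * s2r D.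
Definition gamma : R := (s1r D * s2r D + s1i D * s2i D) / beta.
Definition psi1 : R := (s2r D ^ 2 + s2i D ^ 2) / beta.
Definition psi2 : R := (s1r D ^ 2 + s1i D ^ 2) / beta.
Definition avgE1J1 : R := avg D (fun x => dot (E1 D x) (J1 x)).
Definition avgE1J2 : R := avg D (fun x => dot (E1 D x) (J2 x)).
Definition xi1 : R := (s2i D * avgE1J2 + s2r D * avgE1J1) / beta.
Definition xi2 : R := (s1i D * avgE1J2 + s1r D * avgE1J1) / beta.

Definition sS1 (f x y : R) : R :=
  - gamma * x - psi1 * y + xi1 - dot (e1 P1) (e2 P1) / f.
Definition sS2 (f x y : R) : R :=
  psi2 * x + gamma * y - xi2 - dot (e1 P2) (e2 P2) / (1 - f).

(* p^(alpha)_f = det S^(alpha)_f *)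
Definition pS1 (f x y : R) : R :=
  (x - nsq (e1 P1) / f) * (- x + eta P1 - nsq (e2 P1) / f) - sS1 f x y * sS1 f x y.
Definition pS2 (f x y : R) : R :=
  (y - nsq (e1 P2) / (1 - f)) * (- y + eta P2 - nsq (e2 P2) / (1 - f))
  - sS2 f x y * sS2 f x y.

Definition fstar (p : phase) (f : R) : R :=
  match p with P1 => f | P2 => 1 - f end.

Definition B12 (p : phase) : R := avg D (fun x => dot (Ea1 p x) (Rperp (Ea2 p x))).

Definition tau (p : phase) (f : R) : R :=
  (B12 p - dot (e1 p) (Rperp (e2 p)) / fstar p f) ^ 2.

Definition vplus (p : phase) (x : X D) : vec := vadd (Ea1 p x) (Rperp (Ea2 p x)).
Definition vminus (p : phase) (x : X D) : vec := vsub (Ea1 p x) (Rperp (Ea2 p x)).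

Definition ratio (v : X D -> vec) : R := nsq (vavg v) / avg D (fun x => nsq (v x)).

Definition fel : R := Rmax (ratio (vplus P1)) (ratio (vminus P1)).
Definition feu : R := Rmin (1 - ratio (vplus P2)) (1 - ratio (vminus P2)).

Definition Etil1 (f x y : R) : Prop := pS1 f x y >= tau P1 f.
Definition Etil2 (f x y : R) : Prop := pS2 f x y >= tau P2 f.

Definition Frect (f x y : R) : Prop :=
  nsq (e1 P1) / f <= x <= eta P1 - nsq (e2 P1) / f /\
  nsq (e1 P2) / (1 - f) <= y <= eta P2 - nsq (e2 P2) / (1 - f).

(* v not identically zero (as an L^2 field): <|v|^2> <> 0 *)
Definition nonzero_field (v : X D -> vec) : Prop := avg D (fun x => nsq (v x)) <> 0.

(* Standing assumptions of the context (the PDE itself cannot be stated). *)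
Definition standing : Prop :=
  is_average (X D) (avg D) /\
  0 < avg D (chi P1) < 1 /\
  0 < s1r D /\ 0 < s2r D /\
  (s1r D, s1i D) <> (s2r D, s2i D).

End Defs.

(* A point (x, y) of the first set satisfies det S^(1)_f >= tau^(1)_f >= 0,
   and det S^(1)_f has the shape (x - a)(b - x) - s^2 with
   a = |e^(1)_1|^2 / f and b = eta^(1) - |e^(1)_2|^2 / f.  Hence x lies in
   [a, b] as soon as this interval is non-empty, i.e. as soon as
   |e^(1)_1|^2 + |e^(1)_2|^2 <= f eta^(1); symmetrically for y with 1 - f.

   That inequality comes from the fields v_+- = E_1 +- R_perp E_2: by the
   parallelogram law (R_perp is an isometry),
     |<v_+>|^2 + |<v_->|^2 = 2 (|e_1|^2 + |e_2|^2),
     <|v_+|^2> + <|v_-|^2> = 2 eta,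
   while f >= f_{e,l} (resp. 1 - f >= 1 - f_{e,u}) bounds each ratio
   |<v_+->|^2 / <|v_+-|^2> by f (resp. 1 - f). *)

From Stdlib Require Import Reals Lra Psatz FunctionalExtensionality.
Open Scope R_scope.

Section Average.
Variable T : Type.
Variable A : (T -> R) -> R.
Hypothesis HA : is_average T A.

Lemma avg_ext (g h : T -> R) : (forall x, g x = h x) -> A g = A h.
Proof. intro E; f_equal; apply functional_extensionality; exact E. Qed.

Lemma avg_add (g h : T -> R) : A (fun x => g x + h x) = A g + A h.
Proof. apply (proj1 HA). Qed.

Lemma avg_scale (c : R) (g : T -> R) : A (fun x => c * g x) = c * A g.
Proof. apply (proj1 (proj2 HA)). Qed.

Lemma avg_opp (g : T -> R) : A (fun x => - g x) = - A g.
Proof.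
  rewrite (avg_ext _ (fun x => -1 * g x)) by (intro; ring).
  rewrite avg_scale; ring.
Qed.

Lemma avg_nonneg (g : T -> R) : (forall x, 0 <= g x) -> 0 <= A g.
Proof. apply (proj2 (proj2 (proj2 HA))). Qed.

End Average.

Lemma nsq_ge0 (v : vec) : 0 <= nsq v.
Proof. unfold nsq, dot; nra. Qed.

Lemma parallelogram_Rperp (a b : vec) :
  nsq (vadd a (Rperp b)) + nsq (vsub a (Rperp b)) = 2 * (nsq a + nsq b).
Proof. destruct a, b; unfold nsq, dot, vadd, vsub, Rperp; simpl; ring. Qed.

Section PhaseEnergy.
Variable D : Data.
Hypothesis HA : is_average (X D) (avg D).

Lemma vavg_add (F G : X D -> vec) :
  vavg D (fun x => vadd (F x) (G x)) = vadd (vavg D F) (vavg D G).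
Proof. unfold vavg, vadd; simpl; rewrite !(avg_add _ _ HA); reflexivity. Qed.

Lemma vavg_sub (F G : X D -> vec) :
  vavg D (fun x => vsub (F x) (G x)) = vsub (vavg D F) (vavg D G).
Proof.
  unfold vavg, vsub; simpl; unfold Rminus.
  rewrite !(avg_add _ _ HA), !(avg_opp _ _ HA); reflexivity.
Qed.

Lemma vavg_Rperp (F : X D -> vec) :
  vavg D (fun x => Rperp (F x)) = Rperp (vavg D F).
Proof. unfold vavg, Rperp; simpl; rewrite (avg_opp _ _ HA); reflexivity. Qed.

Lemma mean_parallelogram (p : phase) :
  nsq (vavg D (vplus D p)) + nsq (vavg D (vminus D p))
  = 2 * (nsq (e1 D p) + nsq (e2 D p)).
Proof.
  unfold vplus, vminus.
  rewrite vavg_add, vavg_sub, !vavg_Rperp.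
  apply parallelogram_Rperp.
Qed.

Lemma energy_parallelogram (p : phase) :
  avg D (fun x => nsq (vplus D p x)) + avg D (fun x => nsq (vminus D p x))
  = 2 * eta D p.
Proof.
  unfold eta.
  rewrite <- !(avg_add _ _ HA), <- (avg_scale _ _ HA).
  apply avg_ext; intro x.
  unfold vplus, vminus; rewrite parallelogram_Rperp; ring.
Qed.

Lemma ratio_le_mul (v : X D -> vec) (g : R) :
  nonzero_field D v -> ratio D v <= g ->
  nsq (vavg D v) <= g * avg D (fun x => nsq (v x)).
Proof.
  unfold nonzero_field, ratio; intros Hnz Hr.
  assert (Hpos : 0 < avg D (fun x => nsq (v x))).
  { assert (0 <= avg D (fun x => nsq (v x)))
      by (apply (avg_nonneg _ _ HA); intro; apply nsq_ge0).
    lra. }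
  apply (Rmult_le_compat_r _ _ _ (Rlt_le _ _ Hpos)) in Hr.
  unfold Rdiv in Hr; rewrite Rmult_assoc, Rinv_l in Hr; lra.
Qed.

Lemma mean_energy_bound (p : phase) (g : R) :
  nonzero_field D (vplus D p) -> nonzero_field D (vminus D p) ->
  ratio D (vplus D p) <= g -> ratio D (vminus D p) <= g ->
  nsq (e1 D p) + nsq (e2 D p) <= g * eta D p.
Proof.
  intros Np Nm Rp Rm.
  pose proof (ratio_le_mul _ _ Np Rp) as Bp.
  pose proof (ratio_le_mul _ _ Nm Rm) as Bm.
  pose proof (mean_parallelogram p).
  pose proof (energy_parallelogram p).
  nra.
Qed.

End PhaseEnergy.

Lemma det_confines (a b z s t : R) :
  a <= b -> (z - a) * (- z + b) - s * s >= t ^ 2 -> a <= z <= b.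
Proof.
  intros Hab H.
  assert (0 <= (z - a) * (b - z)) by nra.
  destruct (Rle_dec a z), (Rle_dec z b); try lra; nra.
Qed.

Lemma side_nonempty (n1 n2 et c : R) :
  0 < c -> n1 + n2 <= c * et -> n1 / c <= et - n2 / c.
Proof.
  intros Hc H.
  apply (Rmult_le_reg_l c); [lra|].
  field_simplify; lra.
Qed.

Lemma side_from_det (n1 n2 et c z s t : R) :
  0 < c -> n1 + n2 <= c * et ->
  (z - n1 / c) * (- z + et - n2 / c) - s * s >= t ^ 2 ->
  n1 / c <= z <= et - n2 / c.
Proof.
  intros Hc Hn H.
  apply (det_confines _ _ _ s t); [exact (side_nonempty _ _ _ _ Hc Hn)|].
  replace (- z + (et - n2 / c)) with (- z + et - n2 / c) by ring; exact H.
Qed.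

Theorem mainTheorem9 (D : Data) :
  standing D ->
  beta D <> 0 ->
  sqrt (s1r D ^ 2 + s1i D ^ 2) <> sqrt (s2r D ^ 2 + s2i D ^ 2) ->
  eta D P1 <> 0 -> eta D P2 <> 0 ->
  nonzero_field D (vplus D P1) -> nonzero_field D (vminus D P1) ->
  nonzero_field D (vplus D P2) -> nonzero_field D (vminus D P2) ->
  forall f : R, 0 < f < 1 -> fel D <= f <= feu D ->
  forall x y : R, Etil1 D f x y -> Etil2 D f x y -> Frect D f x y.
Proof.
  intros [HA _] _ _ _ _ Np1 Nm1 Np2 Nm2 f Hf [Hl Hu] x y Hx Hy.
  unfold fel, feu in Hl, Hu.
  assert (B1 : nsq (e1 D P1) + nsq (e2 D P1) <= f * eta D P1).
  { apply (mean_energy_bound D HA); auto.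
    - eapply Rle_trans; [apply Rmax_l | exact Hl].
    - eapply Rle_trans; [apply Rmax_r | exact Hl]. }
  assert (B2 : nsq (e1 D P2) + nsq (e2 D P2) <= (1 - f) * eta D P2).
  { apply (mean_energy_bound D HA); auto.
    - pose proof (Rmin_l (1 - ratio D (vplus D P2)) (1 - ratio D (vminus D P2))); lra.
    - pose proof (Rmin_r (1 - ratio D (vplus D P2)) (1 - ratio D (vminus D P2))); lra. }
  unfold Etil1, Etil2, pS1, pS2, tau in Hx, Hy; simpl fstar in Hx, Hy.
  split.
  - eapply side_from_det; [lra | exact B1 | exact Hx].
  - eapply side_from_det; [lra | exact B2 | exact Hy].
Qed.
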